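(* Let $\mathcal{R}$ be a tolerance relation on $X=\{1,\dots,n\}$ with chordal graph $G(\mathcal{R})$ and set of maximal cliques $\mathcal{C}$, and let $\Phi:E(\mathcal{R})^d\to\bigoplus_{C\in\mathcal{C}}M_{|C|}(\mathbb{C})$, $(x_{ij})\mapsto((x_{ij})_{i,j\in C})_{C\in\mathcal{C}}$. Then the $C^*$-algebra generated by $\Phi(E(\mathcal{R})^d)$ is all of $\bigoplus_{C\in\mathcal{C}}M_{|C|}(\mathbb{C})$.
   Context: A tolerance relation on $X=\{1,\dots,n\}$ is a reflexive symmetric relation $\mathcal{R}\subseteq X\times X$; its graph $G(\mathcal{R})$ has vertex set $X$ and an edge between distinct $i,j$ iff $(i,j)\in\mathcal{R}$. A graph is chordal if every cycle of length at least 4 has a chord. $E(\mathcal{R})=\{(x_{ij})\in M_n(\mathbb{C})\mid x_{ij}=0\text{ if }(i,j)\notin\mathcal{R}\}$, and the dual operator system $E(\mathcal{R})^d$ is identified as a vector space with $E(\mathcal{R})$. Matrices in the $C$-component of the direct sum are indexed by $C$. *)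

From mathcomp Require Import all_boot all_order all_algebra.
From mathcomp Require Import complex Rstruct.
Set Implicit Arguments. Unset Strict Implicit. Unset Printing Implicit Defensive.
Import Order.TTheory GRing.Theory Num.Theory.
Local Open Scope ring_scope.

Definition CC : numClosedFieldType := (Rdefinitions.R)[i]%C.
Definition conjCC (z : CC) : CC := conjc z.

Section Tolerance.
Variable n : nat.
(* X = {1,...,n} is represented by 'I_n = {0,...,n-1}. *)
Variable Rl : rel 'I_n.

Definition tolerance : Prop := reflexive Rl /\ symmetric Rl.

Definition gadj (i j : 'I_n) : bool := (i != j) && Rl i j.

Definition is_gcycle (c : seq 'I_n) : bool :=
  [&& (4 <= size c)%N, uniq c & cycle gadj c].

Definition has_chord (c : seq 'I_n) : Prop :=
  exists x y, [/\ x \in c, y \in c, gadj x y, y != next c x & x != next c y].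

Definition chordal : Prop := forall c, is_gcycle c -> has_chord c.

Definition clique (C : {set 'I_n}) : bool :=
  [forall i in C, forall j in C, Rl i j].
Definition maxclique (C : {set 'I_n}) : bool :=
  clique C && [forall D : {set 'I_n}, clique D ==> ~~ (C \proper D)].

Definition in_ER (x : 'M[CC]_n) : Prop := forall i j, ~~ Rl i j -> x i j = 0.

(* The direct sum  (+)_{C maximal clique} M_{|C|}(CC) is modelled as families
   y : {ffun {set 'I_n} -> 'M[CC]_n} such that, for each maximal clique C,
   the block y C is supported on C x C (i.e. it is a matrix indexed by C),
   and y C = 0 when C is not a maximal clique. *)
Definition DS := {ffun {set 'I_n} -> 'M[CC]_n}.

Definition in_DS (y : DS) : Prop :=
  forall C, if maxclique C
            then forall i j, ~~ ((i \in C) && (j \in C)) -> y C i j = 0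
            else y C = 0.

Definition DSadd (y z : DS) : DS := [ffun C => y C + z C].
Definition DSscale (a : CC) (y : DS) : DS := [ffun C => a *: y C].
Definition DSmul (y z : DS) : DS := [ffun C => y C *m z C].
Definition DSadj (y : DS) : DS := [ffun C => (map_mx conjCC (y C))^T].

Definition Phi (x : 'M[CC]_n) : DS :=
  [ffun C => if maxclique C
             then \matrix_(i, j) (if (i \in C) && (j \in C) then x i j else 0)
             else 0].

(* the *-subalgebra of the direct sum generated by Phi(E(R)); since
   everything is finite dimensional it is norm closed, i.e. it is the
   C*-algebra generated by Phi(E(R)). *)
Inductive gen_cstar : DS -> Prop :=
| gen_base x : in_ER x -> gen_cstar (Phi x)
| gen_add y z : gen_cstar y -> gen_cstar z -> gen_cstar (DSadd y z)
| gen_scale a y : gen_cstar y -> gen_cstar (DSscale a y)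
| gen_mul y z : gen_cstar y -> gen_cstar z -> gen_cstar (DSmul y z)
| gen_adj y : gen_cstar y -> gen_cstar (DSadj y).
End Tolerance.

From mathcomp Require Import all_boot all_order all_algebra.
From mathcomp Require Import complex Rstruct.
Set Implicit Arguments. Unset Strict Implicit. Unset Printing Implicit Defensive.
Import Order.TTheory GRing.Theory Num.Theory.
Local Open Scope ring_scope.

(* Every generator Phi x is supported blockwise on the maximal cliques, and
   this support condition is stable under the *-algebra operations, so the
   generated algebra lies in the direct sum.  Conversely, let C be a maximal
   clique, i, j in C, and c_1, ..., c_k an enumeration of C.  The product
   Phi(E_{i c_1}) Phi(E_{c_1 c_2}) ... Phi(E_{c_k j}) is E_{ij} in every
   component D containing i, j and all of C, and 0 in every other component;
   by maximality the only such D is C itself.  These block matrix units span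
   the direct sum. *)

Section Generation.
Variable n : nat.
Variable Rl : rel 'I_n.

Definition supported_on (S : {set 'I_n}) (A : 'M[CC]_n) : Prop :=
  forall i j, ~~ ((i \in S) && (j \in S)) -> A i j = 0.

Lemma supported_on_set0 (A : 'M[CC]_n) : supported_on set0 A -> A = 0.
Proof. by move=> A0; apply/matrixP=> i j; rewrite A0 ?inE ?mxE. Qed.

Lemma supported_on0 S : supported_on S 0.
Proof. by move=> i j _; rewrite mxE. Qed.

Lemma supported_onD S A B :
  supported_on S A -> supported_on S B -> supported_on S (A + B).
Proof. by move=> SA SB i j ijS; rewrite mxE SA // SB // addr0. Qed.

Lemma supported_onZ S a A : supported_on S A -> supported_on S (a *: A).
Proof. by move=> SA i j ijS; rewrite mxE SA // mulr0. Qed.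

Lemma supported_on_mul S A B :
  supported_on S A -> supported_on S B -> supported_on S (A *m B).
Proof.
move=> SA SB i j ijS; rewrite mxE big1 // => k _.
have [iS|iS] := boolP (i \in S); last by rewrite SA ?mul0r // (negbTE iS).
by rewrite SB ?mulr0 //; apply: contra ijS => /andP[_ ->]; rewrite iS.
Qed.

Lemma supported_on_adj S A :
  supported_on S A -> supported_on S (map_mx conjCC A)^T.
Proof. by move=> SA i j ijS; rewrite !mxE SA /conjCC ?rmorph0 // andbC. Qed.

Lemma supported_on_restrict S (x : 'M[CC]_n) :
  supported_on S (\matrix_(i, j) (if (i \in S) && (j \in S) then x i j else 0)).
Proof. by move=> i j ijS; rewrite mxE (negbTE ijS). Qed.

(* The zero block of a non-maximal clique is read as a block supported on set0. *)
Lemma in_DSP (y : DS n) :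
  (forall C, supported_on (if maxclique Rl C then C else set0) (y C)) ->
  in_DS Rl y.
Proof.
move=> Sy C; have := Sy C.
by case: (maxclique Rl C) => //; apply: supported_on_set0.
Qed.

Lemma gen_cstar_in_DS (y : DS n) : gen_cstar Rl y -> in_DS Rl y.
Proof.
move=> gy; apply: in_DSP.
elim: gy => {y} [x _|y z _ Sy _ Sz|a y _ Sy|y z _ Sy _ Sz|y _ Sy] C; rewrite ffunE.
- by case: (maxclique Rl C); [apply: supported_on_restrict|apply: supported_on0].
- exact: supported_onD.
- exact: supported_onZ.
- exact: supported_on_mul.
- exact: supported_on_adj.
Qed.

Lemma gen_cstar0 : gen_cstar Rl 0.
Proof.
have -> : (0 : DS n) = Phi Rl 0.
  apply/ffunP=> C; rewrite !ffunE; case: ifP => // _.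
  by apply/matrixP=> i j; rewrite !mxE if_same.
by constructor=> i j _; rewrite mxE.
Qed.

Lemma gen_cstarD y z : gen_cstar Rl y -> gen_cstar Rl z -> gen_cstar Rl (y + z).
Proof.
have -> : y + z = DSadd y z by apply/ffunP=> C; rewrite !ffunE.
exact: gen_add.
Qed.

Lemma gen_cstarZ a y : gen_cstar Rl y -> gen_cstar Rl (a *: y).
Proof.
have -> : a *: y = DSscale a y by apply/ffunP=> C; rewrite !ffunE.
exact: gen_scale.
Qed.

Lemma gen_cstar_sum (I : finType) (F : I -> DS n) :
  (forall i, gen_cstar Rl (F i)) -> gen_cstar Rl (\sum_i F i).
Proof.
move=> gF; apply: (big_ind (gen_cstar Rl)) => //.
- exact: gen_cstar0.
- exact: gen_cstarD.
Qed.

Lemma Phi_delta a b C :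
  Phi Rl (delta_mx a b) C =
  if [&& maxclique Rl C, a \in C & b \in C] then delta_mx a b else 0.
Proof.
rewrite ffunE; case: (maxclique Rl C) => //=.
apply/matrixP=> i j; rewrite !(fun_if (fun A : 'M_n => A i j)) !mxE.
case: (eqVneq i a) => [->|]; case: (eqVneq j b) => [->|]; by rewrite ?andbF ?if_same.
Qed.

Fixpoint walk_unit (a : 'I_n) (s : seq 'I_n) : DS n :=
  if s is b :: s' then DSmul (Phi Rl (delta_mx a b)) (walk_unit b s')
  else Phi Rl (delta_mx a a).

Lemma walk_unitE a s C :
  walk_unit a s C =
  if [&& maxclique Rl C, a \in C & all (mem C) s] then delta_mx a (last a s) else 0.
Proof.
elim: s a => [|b s IHs] a /=; first by rewrite Phi_delta andbT andbb.
rewrite ffunE IHs Phi_delta.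
case: (maxclique Rl C) (a \in C) (b \in C) => [] [] [] /=; rewrite ?mul0mx //.
by case: (all _ _); rewrite ?mul_delta_mx ?mulmx0.
Qed.

Lemma gen_cstar_walk_unit C a s :
  clique Rl C -> a \in C -> all (mem C) s -> gen_cstar Rl (walk_unit a s).
Proof.
move=> /forallP clC.
have edgeC u v : u \in C -> v \in C -> gen_cstar Rl (Phi Rl (delta_mx u v)).
  move=> uC vC; apply: gen_base => i j; rewrite mxE.
  case: (eqVneq i u) => [->|]; case: (eqVneq j v) => [->|] //=.
  by move: (clC u) => /implyP/(_ uC)/forallP/(_ v)/implyP/(_ vC) ->.
elim: s a => [|b s IHs] a aC /=; first by move=> _; apply: edgeC.
by case/andP=> bC sC; apply: gen_mul; [apply: edgeC|apply: IHs].
Qed.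

Lemma maxclique_subset_eq C D :
  maxclique Rl C -> maxclique Rl D -> C \subset D -> D = C.
Proof.
move=> /andP[_ /forallP maxC] /andP[clD _] CD.
have := maxC D; rewrite clD /= properE CD negbK => DC.
by apply/eqP; rewrite eqEsubset DC.
Qed.

Definition block (C : {set 'I_n}) (A : 'M[CC]_n) : DS n :=
  [ffun D => if D == C then A else 0].

Lemma sum_block (y : DS n) : \sum_C block C (y C) = y.
Proof.
apply/ffunP=> D; rewrite sum_ffunE (bigD1 D) //= big1 ?addr0 ?ffunE ?eqxx //.
by move=> C; rewrite ffunE eq_sym => /negbTE ->.
Qed.

Lemma block_delta_walk C i j :
  maxclique Rl C -> i \in C -> j \in C ->
  block C (delta_mx i j) = walk_unit i (enum C ++ [:: j]).
Proof.
move=> maxC iC jC; apply/ffunP=> D; rewrite ffunE walk_unitE last_cat all_cat /= andbT.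
have -> : all (mem D) (enum C) = (C \subset D).
  by rewrite -subset_all; apply: eq_subset => x; rewrite mem_enum.
case: (eqVneq D C) => [->|DC]; first by rewrite maxC iC jC subxx.
case maxD: (maxclique Rl D) => //=; case CD: (C \subset D); last by rewrite !andbF.
by move: DC; rewrite (maxclique_subset_eq maxC maxD CD) eqxx.
Qed.

Lemma gen_cstar_block C A :
  maxclique Rl C -> supported_on C A -> gen_cstar Rl (block C A).
Proof.
move=> maxC SA.
have -> : block C A = \sum_i \sum_j A i j *: block C (delta_mx i j).
  apply/ffunP=> D; rewrite ffunE sum_ffunE.
  under eq_bigr => i _ do rewrite sum_ffunE.
  under eq_bigr => i _ do under eq_bigr => j _ do rewrite !ffunE.
  case: (D == C); first exact: matrix_sum_delta.
  by rewrite big1 // => i _; rewrite big1 // => j _; rewrite scaler0.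
apply: gen_cstar_sum => i; apply: gen_cstar_sum => j.
have [/andP[iC jC]|ijC] := boolP ((i \in C) && (j \in C)); last first.
  by rewrite SA // scale0r; exact: gen_cstar0.
apply: gen_cstarZ; rewrite block_delta_walk //.
have clC : clique Rl C by case/andP: maxC.
apply: (gen_cstar_walk_unit clC iC).
by apply/allP=> x; rewrite mem_cat mem_enum mem_seq1 => /orP[//|/eqP->].
Qed.

Lemma in_DS_gen_cstar (y : DS n) : in_DS Rl y -> gen_cstar Rl y.
Proof.
move=> DSy; rewrite -[y]sum_block; apply: gen_cstar_sum => C.
have := DSy C; case: ifP => [maxC SC|_ ->]; first exact: gen_cstar_block maxC SC.
have -> : block C 0 = 0 by apply/ffunP=> D; rewrite !ffunE if_same.
exact: gen_cstar0.
Qed.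

End Generation.

Theorem mainTheorem5 (n : nat) (Rl : rel 'I_n) :
  tolerance Rl -> chordal Rl ->
  forall y : DS n, gen_cstar Rl y <-> in_DS Rl y.
Proof.
by move=> _ _ y; split; [exact: gen_cstar_in_DS|exact: in_DS_gen_cstar].
Qed.
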